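(* Let $(X_{i,j})_{i,j\ge1}$ be an infinite double array of identically distributed random variables with mean $0$, variance $1$ and $\mathbf{E}\big(|X_{i,j}|^4(\log|X_{i,j}|)^{2+2\varepsilon}\big)<\infty$ for some $\varepsilon>0$. Let $p=p(n)$ with $p/n\to\rho<\infty$, and let $X_n$ be the upper-left $n\times p$ corner of this array. Let $T_n$ be the $n\times p$ matrix with entries $X_{i,j}1_{|X_{i,j}|<\sqrt n/(\log n)^{(1+\varepsilon)/2}}$. Then $P(X_n\ne T_n\text{ infinitely often})=0$. *)

From mathcomp Require Import all_boot all_order all_algebra.
From mathcomp Require Import all_classical all_reals all_analysis.
Set Implicit Arguments. Unset Strict Implicit. Unset Printing Implicit Defensive.
Import Order.TTheory GRing.Theory Num.Theory.
Local Open Scope classical_set_scope.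
Local Open Scope ring_scope.

Definition trunc_level (R : realType) (eps : R) (n : nat) : R :=
  Num.sqrt n%:R / (ln n%:R) `^ ((1 + eps) / 2).

(* The event {X_n <> T_n}: some entry of the upper-left n x p(n) corner
   (indices 0-based: i < n, j < p n) is not below the truncation level,
   i.e. differs from its truncation X_{ij} 1_{|X_{ij}| < level}. *)
Definition corner_ne_trunc d (T : measurableType d) (R : realType)
  (X : nat -> nat -> T -> R) (p : nat -> nat) (eps : R) (n : nat) : set T :=
  [set w | exists i j, (i < n)%N /\ (j < p n)%N /\
      X i j w != (if `|X i j w| < trunc_level eps n then X i j w else 0)].

Definition infinitely_often T (A : nat -> set T) : set T :=
  [set w | forall N, exists2 n, (N <= n)%N & A n w].

From mathcomp Require Import all_boot all_order all_algebra.
From mathcomp Require Import all_classical all_reals all_analysis.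
From mathcomp Require Import measurable_realfun lra ring.
Import Order.TTheory GRing.Theory Num.Theory.
Local Open Scope classical_set_scope.
Local Open Scope ring_scope.

(* Borel-Cantelli along dyadic blocks.  For 2^k <= n < 2^(k+1) the n x p(n) corner
   has fewer than 2^(k+1) rows and, eventually, fewer than K 2^(k+1) columns, so
   every event {X_n <> T_n} of the block lies in one event B_k with
   P(B_k) <= 4K 4^k P(|X_00| exceeds a truncation level of the block).  Once
   ln n >= 16 (1+eps)^2, exceeding the level at n forces n^2 <= g(X_00) with
   g(x) = 4^e |x|^4 |ln |x||^e, e = 2 + 2 eps, and sum_k 4^k 1{4^k <= g} <= 4g/3.
   Hence sum_k P(B_k) <= (16K/3) E g < oo, and limsup B_k, which contains the
   limsup of the corner events, is null. *)

Section truncation_level.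
Context {R : realType}.
Implicit Types (eps x y : R) (n : nat).

Lemma ln_le_twice_sqrt x : 0 < x -> ln x <= 2 * Num.sqrt x.
Proof.
move=> x0; have s0 : 0 < Num.sqrt x by rewrite sqrtr_gt0.
rewrite -{1}(sqr_sqrtr (ltW x0)) lnXn // mulr2n.
by have := ln_sublinear s0; lra.
Qed.

Lemma gt1_of_ln_gt0 x : 0 < ln x -> 1 < x.
Proof. by move=> lx; rewrite ltNge; apply: contraTN lx => /ln_le0; rewrite -leNgt. Qed.

Lemma trunc_level_gt0 eps n : 0 < ln (n%:R : R) -> 0 < trunc_level eps n.
Proof.
move=> L0; have n1 := gt1_of_ln_gt0 _ L0.
by rewrite /trunc_level divr_gt0 ?powR_gt0 // sqrtr_gt0 (lt_trans ltr01).
Qed.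

Lemma trunc_level_pow4 eps n : 0 < ln (n%:R : R) ->
  trunc_level eps n ^+ 4 = n%:R ^+ 2 / ln n%:R `^ (2 + 2 * eps).
Proof.
move=> L0; rewrite /trunc_level expr_div_n.
have -> : Num.sqrt (n%:R : R) ^+ 4 = n%:R ^+ 2.
  by rewrite (_ : 4 = 2 * 2)%N // exprM sqr_sqrtr.
rewrite -[_ `^ _ ^+ 4]powR_mulrn ?powR_ge0 // -powRrM.
by congr (_ / _ `^ _); lra.
Qed.

Lemma ln_trunc_level_ge eps n : 0 < eps -> 16 * (1 + eps) ^+ 2 <= ln (n%:R : R) ->
  ln n%:R / 4 <= ln (trunc_level eps n).
Proof.
move=> eps0 hL; set L := ln (n%:R : R); set a := 1 + eps.
have a0 : 0 < a by rewrite /a; lra.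
have L0 : 0 < L by apply: lt_le_trans hL; rewrite mulr_gt0 // exprn_gt0.
have n0 : 0 < n%:R :> R by rewrite (lt_trans ltr01) // gt1_of_ln_gt0.
set s := Num.sqrt L.
have s0 : 0 < s by rewrite sqrtr_gt0.
have ss : s * s = L by rewrite -expr2 sqr_sqrtr // ltW.
have a_le_s : 4 * a <= s.
  rewrite /s -(@ger0_norm _ (4 * a)); last by lra.
  rewrite -sqrtr_sqr ler_sqrt; last exact: ltW.
  by rewrite exprMn (_ : 4 ^+ 2 = 16 :> R) //; lra.
have lnL : a / 2 * ln L <= L / 4.
  have : a / 2 * ln L <= a / 2 * (2 * s) by rewrite ler_wpM2l ?ln_le_twice_sqrt //; lra.
  have : 4 * a * s <= s * s by rewrite ler_wpM2r // ltW.
  rewrite ss; nra.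
rewrite /trunc_level ln_div ?posrE ?sqrtr_gt0 ?powR_gt0 // ln_powR -/L -/a.
by rewrite -powR12_sqrt ?ln_powR -/L; [lra | exact: ltW].
Qed.

Lemma sq_le_of_trunc_level_le eps n y : 0 < eps ->
  16 * (1 + eps) ^+ 2 <= ln (n%:R : R) -> trunc_level eps n <= y ->
  n%:R ^+ 2 <= 4 `^ (2 + 2 * eps) * (y ^+ 4 * `|ln y| `^ (2 + 2 * eps)).
Proof.
move=> eps0 hL hy.
have L0 : 0 < ln (n%:R : R).
  by apply: lt_le_trans hL; rewrite mulr_gt0 // exprn_gt0; lra.
have lvl0 := trunc_level_gt0 eps n L0.
have y0 : 0 < y := lt_le_trans lvl0 hy.
have lny : ln (n%:R : R) / 4 <= `|ln y|.
  apply: le_trans (ln_trunc_level_ge eps n eps0 hL) _.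
  by apply: le_trans (ler_norm _); rewrite ler_ln ?posrE.
(* [4^e (L/4)^e = L^e] cancels the logarithmic loss in the truncation level. *)
have cancel_e : 4 `^ (2 + 2 * eps) * (ln (n%:R : R) / 4) `^ (2 + 2 * eps) =
                ln (n%:R : R) `^ (2 + 2 * eps).
  rewrite -powRM ?divr_ge0 ?ltW //; congr (_ `^ _).
  by rewrite mulrC divfK.
apply: le_trans (_ : 4 `^ (2 + 2 * eps) * (trunc_level eps n ^+ 4 *
   (ln (n%:R : R) / 4) `^ (2 + 2 * eps)) <= _).
  rewrite (trunc_level_pow4 eps n L0) mulrA (mulrC (4 `^ _)) -mulrA -mulrA cancel_e.
  by rewrite mulVf ?mulr1 // gt_eqF ?powR_gt0.
rewrite ler_wpM2l ?powR_ge0 // ler_pM ?powR_ge0 ?exprn_ge0 ?(ltW lvl0) //.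
  by rewrite lerXn2r ?nnegrE ?(ltW lvl0) ?(ltW y0).
by rewrite ge0_ler_powR ?nnegrE //; lra.
Qed.
End truncation_level.

Lemma sum_pow4_le (R : realType) (M : R) n : 0 <= M ->
  \sum_(0 <= k < n) 4 ^+ k * (4 ^+ k <= M)%R%:R <= 4 / 3 * M.
Proof.
move=> M0; set S := \sum_(_ <= _ < _) _.
suff [] : S <= 4 / 3 * M /\ S <= (4 ^+ n - 1) / 3 by [].
rewrite {}/S; elim: n => [|n [IHM IHn]]; first by rewrite big_geq // expr0; lra.
rewrite big_nat_recr //= exprS.
have p0 : 0 <= 4 ^+ n :> R by rewrite exprn_ge0.
by case: (leP (4 ^+ n) M) => h; rewrite ?mulr1 ?mulr0 ?addr0; split; lra.
Qed.

Lemma nneseries_pow4_le (R : realType) (M : R) : 0 <= M ->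
  (\sum_(k <oo) (4 ^+ k * (4 ^+ k <= M)%R%:R)%:E <= (4 / 3 * M)%:E)%E.
Proof.
move=> M0; apply: lime_le.
  by apply: is_cvg_nneseries => k _ _; rewrite lee_fin mulr_ge0 ?exprn_ge0.
by apply: nearW => n; rewrite sumEFin lee_fin sum_pow4_le.
Qed.

Lemma measurable_superlevel d (T : measurableType d) (R : realType)
  (f : T -> R) (a : R) : measurable_fun setT f -> measurable [set w | a <= f w].
Proof.
move=> mf; rewrite (_ : [set w | _] = setT `&` f @^-1` `[a, +oo[).
  exact: mf (measurable_itv _).
by apply/seteqP; split => w /=; rewrite in_itv /= andbT; [split | case].
Qed.

Lemma nneseries_pow4_superlevel_le d (T : measurableType d) (R : realType)
  (mu : {measure set T -> \bar R}) (f : T -> R) :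
  measurable_fun setT f -> (forall w, 0 <= f w) ->
  (\sum_(k <oo) (4 ^+ k)%:E * mu [set w | (4 ^+ k <= f w)%R] <=
   (4 / 3)%:E * \int[mu]_w (f w)%:E)%E.
Proof.
move=> mf f0; pose E k := [set w | 4 ^+ k <= f w].
have mE k : measurable (E k) by exact: measurable_superlevel.
have pow4_ge0 k : 0 <= 4 ^+ k :> R by rewrite exprn_ge0.
have -> : (\sum_(k <oo) (4 ^+ k)%:E * mu (E k) =
           \sum_(k <oo) \int[mu]_w (4 ^+ k * \1_(E k) w)%:E)%E.
  apply: eq_eseriesr => k _.
  rewrite (integralZl_indic measurableT (fun=> E k)) ?integral_indic ?setIT //.
  by rewrite ltNge pow4_ge0.
have term_ge0 k w : (0 <= (4 ^+ k * \1_(E k) w)%:E)%E.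
  by rewrite lee_fin mulr_ge0.
have mterm k : measurable_fun setT (fun w => (4 ^+ k * \1_(E k) w)%:E).
  by apply/measurable_EFinP/measurable_funM => //; exact: measurable_indic.
rewrite -integral_nneseries // -ge0_integralZl_EFin //; last 2 first.
- by move=> w _; rewrite lee_fin.
- exact/measurable_EFinP.
apply: ge0_le_integral => //.
- by move=> w _; exact: nneseries_ge0.
- exact: ge0_emeasurable_sum.
- exact/measurable_funeM/measurable_EFinP.
move=> w _; rewrite -EFinM.
apply: le_trans; last exact: nneseries_pow4_le.
apply: lee_nneseries => // k _.
rewrite indicE lee_fin ler_wpM2l //.
by case: (boolP (w \in E k)) => [/set_mem ->|_]; rewrite ?ler0n.
Qed.

Lemma measure_bigcup_ltn_le {d} {T : measurableType d} {R : realType}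
  (mu : {measure set T -> \bar R}) (F : nat -> set T) m :
  (forall i, measurable (F i)) ->
  (mu (\bigcup_(i in `I_m) F i) <= \sum_(i < m) mu (F i))%E.
Proof.
move=> mF; apply: content_subadditive => //.
  by apply: bigcup_measurable => i _; exact: mF.
by rewrite -bigcup_mkord.
Qed.

Lemma measurable_norm_ge (R : realType) (l : R) : measurable [set x : R | l <= `|x|].
Proof.
have := normr_measurable measurableT (measurable_itv `[l, +oo[).
rewrite setTI; congr measurable.
by apply/seteqP; split => x /=; rewrite in_itv /= andbT.
Qed.

Lemma neq_truncation (R : realDomainType) (x l : R) :
  (x != (if `|x| < l then x else 0)) = (l <= `|x|) && (x != 0).
Proof. by rewrite ltNge; case: (l <= `|x|); rewrite /= ?eqxx. Qed.

Lemma corner_ne_truncE d (T : measurableType d) (R : realType)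
  (X : nat -> nat -> T -> R) (p : nat -> nat) (eps : R) n :
  corner_ne_trunc X p eps n = \bigcup_(i in `I_n) \bigcup_(j in `I_(p n))
    X i j @^-1` ([set x | trunc_level eps n <= `|x|] `&` ~` [set 0]).
Proof.
apply/seteqP; split => w /=.
- case=> i [j [ilt [jlt]]]; rewrite neq_truncation => /andP[lvl /eqP X0].
  by exists i => //; exists j.
- case=> i ilt [j jlt [lvl /eqP X0]].
  by exists i, j; do 2 split => //; rewrite neq_truncation lvl X0.
Qed.

Lemma measurable_corner_ne_trunc d (T : measurableType d) (R : realType)
  (X : nat -> nat -> {mfun T >-> R}) (p : nat -> nat) (eps : R) n :
  measurable (corner_ne_trunc (fun i j => X i j : T -> R) p eps n).
Proof.
rewrite corner_ne_truncE; apply: bigcup_measurable => i _.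
apply: bigcup_measurable => j _; apply: measurable_funPTI.
apply: measurableI; first exact: measurable_norm_ge.
by apply: measurableC; exact: measurable_set1.
Qed.

Lemma infinitely_oftenE T (A : nat -> set T) :
  infinitely_often A = lim_sup_set A.
Proof.
apply/seteqP; split => w /=.
- by move=> ioA M _; have [n Mn An] := ioA M; exists n.
- by move=> ioA M; have [n Mn An] := ioA M I; exists n.
Qed.

Lemma measurable_lim_sup_set d (T : measurableType d) (A : nat -> set T) :
  (forall n, measurable (A n)) -> measurable (lim_sup_set A).
Proof.
move=> mA; apply: bigcap_measurableType => k _.
by apply: bigcup_measurable => n _; exact: mA.
Qed.

Section dyadic_blocks.
Context {d} {T : measurableType d} {R : realType} {P : probability T R}.
Variables (X : nat -> nat -> {RV P >-> R}) (eps : R) (p : nat -> nat) (K N : nat).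

Definition block_exceedance k : set R :=
  \bigcup_(n in [set n | [/\ (2 ^ k <= n)%N, (n < 2 ^ k.+1)%N & (N <= n)%N]])
    [set y | trunc_level eps n <= `|y|].

Definition block_event k : set T :=
  \bigcup_(i in `I_(2 ^ k.+1)) \bigcup_(j in `I_(K * 2 ^ k.+1))
    X i j @^-1` block_exceedance k.

Lemma measurable_block_exceedance k : measurable (block_exceedance k).
Proof. by apply: bigcup_measurable => n _; exact: measurable_norm_ge. Qed.

Lemma measurable_block_event k : measurable (block_event k).
Proof.
apply: bigcup_measurable => i _; apply: bigcup_measurable => j _.
exact: measurable_funPTI (measurable_block_exceedance k).
Qed.

Hypothesis p_le : forall n, (N <= n)%N -> (p n <= K * n)%N.

Lemma infinitely_often_sub_lim_sup_block :
  infinitely_often (corner_ne_trunc (fun i j => X i j : T -> R) p eps) `<=`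
  lim_sup_set block_event.
Proof.
move=> w ioA M _; have [n Mn [i [j [ilt [jlt]]]]] := ioA (maxn N (2 ^ M)).
rewrite neq_truncation => /andP[lvl _].
move: Mn; rewrite geq_max => /andP[Nn Mn].
have n_gt0 : (0 < n)%N by rewrite (leq_trans _ Mn) ?expn_gt0.
have kn : (2 ^ trunc_log 2 n <= n)%N := trunc_logP (ltnSn 1) n_gt0.
have nk : (n < 2 ^ (trunc_log 2 n).+1)%N := trunc_log_ltn n (ltnSn 1).
exists (trunc_log 2 n).
  by rewrite /= -ltnS -(ltn_exp2l _ _ (ltnSn 1)) (leq_ltn_trans Mn).
exists i; first exact: ltn_trans ilt nk.
exists j; last by exists n.
by rewrite /= (leq_trans jlt) // (leq_trans (p_le n Nn)) // leq_mul2l ltnW ?orbT.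
Qed.

Hypothesis X_id : forall i j (B : set R), measurable B ->
  P (X i j @^-1` B) = P (X 0%N 0%N @^-1` B).

Lemma block_event_le k :
  (P (block_event k) <= ((4 * K)%:R * 4 ^+ k)%:E * P (X 0%N 0%N @^-1` block_exceedance k))%E.
Proof.
have mXB i j := measurable_funPTI (X i j) (measurable_block_exceedance k).
apply: le_trans (measure_bigcup_ltn_le P _ _ _) _.
  by move=> i; apply: bigcup_measurable => j _; exact: mXB.
apply: le_trans (_ : \sum_(i < 2 ^ k.+1) \sum_(j < K * 2 ^ k.+1)
    P (X 0%N 0%N @^-1` block_exceedance k) <= _)%E.
  apply: lee_sum => i _; apply: le_trans (measure_bigcup_ltn_le P _ _ _) _ => //.
  apply: lee_sum => j _; rewrite le_eqVlt; apply/orP; left.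
  by apply/eqP/X_id; exact: measurable_block_exceedance.
have -> : (4 * K)%:R * 4 ^+ k = (K * 2 ^ k.+1 * 2 ^ k.+1)%:R :> R.
  have -> : (4 : R) ^+ k = 2 ^+ k * 2 ^+ k by rewrite -exprMn; congr (_ ^+ _); lra.
  by rewrite !natrM !natrX !exprS; ring.
by rewrite mule_natl !sumr_const !card_ord -mulrnA.
Qed.

Hypotheses (eps_gt0 : 0 < eps)
  (ln_ge : forall n, (N <= n)%N -> 16 * (1 + eps) ^+ 2 <= ln (n%:R : R)).

Lemma block_exceedance_sub k : block_exceedance k `<=`
  [set y | 4 ^+ k <= 4 `^ (2 + 2 * eps) * (`|y| ^+ 4 * `|ln `|y| | `^ (2 + 2 * eps))].
Proof.
move=> y [n [kn _ Nn] lvl] /=.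
apply: le_trans (sq_le_of_trunc_level_le _ _ _ eps_gt0 (ln_ge n Nn) lvl).
have -> : (4 : R) ^+ k = (2 ^ k)%:R ^+ 2.
  by rewrite natrX -exprM mulnC exprM; congr (_ ^+ _); lra.
by rewrite lerXn2r ?nnegrE ?ler0n // ler_nat.
Qed.

Hypothesis X_int : P.-integrable setT
  (fun w => (`|X 0%N 0%N w| ^+ 4 * `|ln `|X 0%N 0%N w| | `^ (2 + 2 * eps))%:E).

Lemma block_events_summable : (\sum_(k <oo) P (block_event k) < +oo)%E.
Proof.
pose f w := 4 `^ (2 + 2 * eps) *
  (`|X 0%N 0%N w| ^+ 4 * `|ln `|X 0%N 0%N w| | `^ (2 + 2 * eps)).
have f_ge0 w : 0 <= f w by rewrite mulr_ge0 ?powR_ge0 ?mulr_ge0 ?exprn_ge0 ?powR_ge0.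
have /integrableP[/measurable_EFinP mf f_fin] := integrableZl measurableT (4 `^ (2 + 2 * eps)) X_int.
have block_le k : (P (block_event k) <=
    (4 * K)%:R%:E * ((4 ^+ k)%:E * P [set w | (4 ^+ k <= f w)%R]))%E.
  apply: le_trans (block_event_le k) _; rewrite EFinM -muleA lee_wpmul2l //.
  rewrite lee_wpmul2l ?lee_fin ?exprn_ge0 // le_measure ?inE //.
  - exact: measurable_funPTI (measurable_block_exceedance k).
  - exact: measurable_superlevel.
  - by move=> w /block_exceedance_sub.
apply: le_lt_trans (lee_nneseries (fun k _ _ => measure_ge0 _ _)
  (fun k _ => block_le k)) _.
rewrite nneseriesZl; last by move=> k _; rewrite mule_ge0.
apply: le_lt_trans (_ : _ <= (4 * K)%:R%:E * ((4 / 3)%:E * \int[P]_w (f w)%:E))%E _.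
  by rewrite lee_wpmul2l ?lee_fin // nneseries_pow4_superlevel_le.
rewrite !lte_mul_pinfty ?lee_fin //.
move: f_fin; rewrite (eq_integral (fun w => (f w)%:E)) // => w _.
by rewrite abse_EFin ger0_norm.
Qed.
End dyadic_blocks.

Lemma eventually_leq_mul_of_cvg_ratio {R : realType} {u : nat -> nat} {rho : R} :
  (fun n : nat => (u n)%:R / n%:R : R) @ \oo --> (rho : R^o) ->
  exists K N, forall n, (N <= n)%N -> (u n <= K * n)%N.
Proof.
move=> u_cvg; pose K := Num.bound (`|rho| + 1).
have rhoK : `|rho| + 1 < K%:R by apply: archi_boundP; rewrite addr_ge0.
have rho_lt : rho < rho + 1 by rewrite ltrDl.
have [N _ uN] := cvgr_lt rho u_cvg (rho + 1) rho_lt.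
exists K, N.+1 => n Nn.
have n_gt0 : 0 < n%:R :> R by rewrite ltr0n (leq_trans _ Nn).
have := uN n (ltnW Nn); rewrite /= ltr_pdivrMr // => un.
suff : (u n)%:R < (K * n)%:R :> R by rewrite ltr_nat => /ltnW.
rewrite natrM (lt_le_trans un) // ler_wpM2r ?ltW //.
by have := ler_norm rho; lra.
Qed.

Lemma eventually_ln_natr_ge {R : realType} (c : R) :
  exists N, forall n, (N <= n)%N -> c <= ln (n%:R : R).
Proof.
exists (Num.bound (expR c)) => n Nn.
have cn : expR c < n%:R.
  by apply: lt_le_trans (archi_boundP (ltW (expR_gt0 c))) _; rewrite ler_nat.
by rewrite -[c]expRK ler_ln ?posrE ?expR_gt0 ?ltW // (lt_trans (expR_gt0 c)).
Qed.

Theorem lemma2 (d : measure_display) (T : measurableType d) (R : realType)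
  (P : probability T R) (X : nat -> nat -> {RV P >-> R})
  (eps rho : R) (p : nat -> nat) :
  (forall i j (B : set R), measurable B ->
      P (X i j @^-1` B) = P (X 0%N 0%N @^-1` B)) ->
  (forall i j, ('E_P[X i j] = 0)%E) ->
  (forall i j, variance P (X i j) = 1%E) ->
  0 < eps ->
  (forall i j, P.-integrable setT
      (fun w => (`|X i j w| ^+ 4 * `|ln `|X i j w| | `^ (2 + 2 * eps))%:E)) ->
  (fun n : nat => (p n)%:R / n%:R : R) @ \oo --> (rho : R^o) ->
  P (infinitely_often (corner_ne_trunc (fun i j => X i j : T -> R) p eps)) = 0%E.
Proof.
move=> X_id _ _ eps_gt0 X_int p_cvg.
have [K [N1 p_le]] := eventually_leq_mul_of_cvg_ratio p_cvg.
have [N0 ln_ge] := eventually_ln_natr_ge (16 * (1 + eps) ^+ 2 : R).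
pose N := maxn N0 N1.
have p_le' n : (N <= n)%N -> (p n <= K * n)%N.
  by rewrite geq_max => /andP[_]; exact: p_le.
have ln_ge' n : (N <= n)%N -> 16 * (1 + eps) ^+ 2 <= ln (n%:R : R).
  by rewrite geq_max => /andP[+ _]; exact: ln_ge.
apply/eqP; rewrite eq_le measure_ge0 andbT.
rewrite -(lim_sup_set_cvg0 (mu := P) (measurable_block_event X eps K N)); last first.
  by apply: block_events_summable => //; exact: X_int.
apply: le_measure; rewrite ?inE.
- rewrite infinitely_oftenE; apply: measurable_lim_sup_set => n.
  exact: measurable_corner_ne_trunc.
- exact/measurable_lim_sup_set/measurable_block_event.
- exact: infinitely_often_sub_lim_sup_block.
Qed.
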